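(* Let $K$ be an infinite field of characteristic $p>0$, let $\lambda=(\lambda_1,\dots,\lambda_n)$ and $\mu=(\mu_1,\dots,\mu_n)$ be partitions of $r$ with $\mu_2\le\lambda_1$, let $k,d$ be positive integers, and let $\mu^+=(\mu_1+kp^d,\mu_2,\dots,\mu_n)$. Let $c_U\in K$ for $U\in A$. Then \[\sum_{U\in A}c_U[U]=0 \text{ in } \Delta(\mu)\iff\sum_{U\in A}c_U[U^+]=0 \text{ in } \Delta(\mu^+).\]
   Context: $V=K^n$ with basis $e_1<\dots<e_n$, written $1,\dots,n$; $D(\nu)=D_{\nu_1}V\otimes\cdots\otimes D_{\nu_n}V$ (divided powers), $i^{(a)}$ the $a$-th divided power of $e_i$. $\Delta(\nu)$ is the Weyl module of the Schur algebra $S_K(n,|\nu|)$, with the Akin–Buchsbaum–Weyman surjection $d'_\nu:D(\nu)\to\Delta(\nu)$. A tableau of shape $\nu$ is a filling of the Young diagram of $\nu$ by entries in $\{1,\dots,n\}$. For a tableau $T$, $x_T=x_T(1)\otimes\cdots\otimes x_T(n)\in D(\nu)$ where $x_T(i)=1^{(a_{i1})}\cdots n^{(a_{in})}$ with $a_{ij}$ the number of $j$'s in row $i$, and $[T]=d'_\nu(x_T)$. For a tableau $T$ of shape $\mu$, $T^+$ is the tableau of shape $\mu^+$ obtained by inserting $kp^d$ entries $1$ at the start of the top row. $A$ is the set of tableaux of shape $\mu$ whose row $i$ (for each $i$) contains only entries $\ge i$ and whose first row contains exactly $\lambda_1+t$ entries equal to $1$ for some $0\le t\le\lambda_2$. 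*)

From mathcomp Require Import all_boot all_order all_algebra.
Set Implicit Arguments. Unset Strict Implicit. Unset Printing Implicit Defensive.
Import GRing.Theory.
Local Open Scope ring_scope.

(* Conventions: V = K^n with basis e_1 < ... < e_n, written 1..n (entries are
   nats in [1, n]).  A tableau (filling) of shape nu is a [seq (seq nat)]
   whose i-th row has size nu_i (rows are 1-based in the paper, 0-based here). *)

Definition tableau := seq (seq nat).

Definition is_partition (n r : nat) (nu : seq nat) : bool :=
  [&& size nu == n, sorted geq nu & sumn nu == r]%N.

Definition shape (T : tableau) : seq nat := map size T.

Fixpoint words (n m : nat) : seq (seq nat) :=
  if m is m'.+1 then [seq a :: w | a <- iota 1 n, w <- words n m'] else [:: [::]].

Definition tabs (n : nat) (nu : seq nat) : seq tableau :=
  foldr (fun m acc => [seq w :: T | w <- words n m, T <- acc]) [:: [::]] nu.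

(* ---- The ABW map d'_nu : D(nu) -> Lambda(nu~) = (x)_j Lambda^{nu~_j} V ----
   d'_nu comultiplies each D_{nu_i} V into V^{(x) nu_i} (a monomial
   1^(a_1)...n^(a_n) goes to the sum, with coefficient 1, of all DISTINCT
   words with that content), places the word of row i along row i of the
   diagram, and multiplies each column into the exterior power.  Elements of
   (x)_j Lambda^{nu~_j} V are described by their coordinates in the basis
   e_{S_1} (x) ... (x) e_{S_{nu_1}}, S_j strictly increasing sequences
   (e_S = e_{s_1} /\ ... /\ e_{s_k}). *)

Definition rowarr (T : tableau) : seq tableau :=
  foldr (fun row acc => [seq w :: T' | w <- permutations row, T' <- acc]) [:: [::]] T.

Definition column (T : tableau) (j : nat) : seq nat :=
  [seq nth 0%N row j | row <- T & (j < size row)%N].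

Definition inversions (w : seq nat) : nat :=
  (\sum_(i < size w) \sum_(j < size w | (i < j)%N) (nth 0 w j < nth 0 w i))%N.

(* coordinate of e_{w_1} /\ ... /\ e_{w_k} on the basis vector e_S *)
Definition wedge_coord (K : fieldType) (w S : seq nat) : K :=
  if sorted ltn S && perm_eq w S then (-1) ^+ inversions w else 0.

(* coordinate of [T] = d'_nu(x_T) on the basis vector indexed by Ss *)
Definition bracket_coord (K : fieldType) (T : tableau) (Ss : seq (seq nat)) : K :=
  \sum_(T' <- rowarr T)
     \prod_(j < size (head [::] T)) wedge_coord K (column T' j) (nth [::] Ss j).

(* sum_{(c, T) in F} c [T] = 0 in Delta(nu) (= image of d'_nu) *)
Definition weyl_comb_eq0 (K : fieldType) (F : seq (K * tableau)) : Prop :=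
  forall Ss : seq (seq nat),
    \sum_(cT <- F) cT.1 * bracket_coord K cT.2 Ss = 0.

Definition part_plus (m : nat) (mu : seq nat) : seq nat :=
  if mu is a :: s then (a + m)%N :: s else [::].

Definition tab_plus (m : nat) (T : tableau) : tableau :=
  if T is row :: T' then (nseq m 1%N ++ row) :: T' else [::].

Definition setA (n : nat) (la mu : seq nat) : seq tableau :=
  [seq U <- tabs n mu |
    all (fun i => all (fun e => i.+1 <= e) (nth [::] U i)) (iota 0 n)
    && (nth 0 la 0 <= count_mem 1%N (head [::] U) <= nth 0 la 0 + nth 0 la 1)]%N.

From mathcomp Require Import all_boot all_order all_algebra.
From mathcomp Require Import zify.
Set Implicit Arguments. Unset Strict Implicit. Unset Printing Implicit Defensive.
Import GRing.Theory.
Local Open Scope ring_scope.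

(* Columns beyond the second row length q of mu have length one, so every
   coordinate of [U] factors as a sum over the arrangements w of the top row:
   the columns j >= q must read off w_j exactly, and only the first q entries of
   w interact with the lower rows.  The entries w_j, j >= q, thus enter only
   through their multiset.  Since the top row of U contains at least
   la_1 >= mu_2 = q ones, at least m of the ones of U^+ sit in the singleton
   columns; deleting m ones from (resp. inserting m ones into) the singleton
   part of a basis vector matches the coordinates of the [U^+] with those of
   the [U].  Neither the characteristic nor the value m = k p^d plays any role. *)

Definition singletons (v : seq nat) : seq (seq nat) := [seq [:: x] | x <- v].

Definition cols_from (Ss : seq (seq nat)) (q len : nat) : seq (seq nat) :=
  [seq nth [::] Ss j | j <- iota q len].

Definition with_tail (Ss : seq (seq nat)) (q : nat) (v : seq nat) : seq (seq nat) :=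
  mkseq (nth [::] Ss) q ++ singletons v.

Definition long_top_row (q L : nat) (T : tableau) : bool :=
  if T is row :: R then
    [&& size row == L, all (fun r => size r <= q) R & q <= count_mem 1 row]%N
  else false.

Lemma singletons_inj : injective singletons.
Proof. by apply: inj_map => x y []. Qed.

Lemma singletonsP (t : seq (seq nat)) :
  reflect (exists v, t = singletons v) (all (fun s => size s == 1%N) t).
Proof.
apply: (iffP allP) => [allS | [v ->] _ /mapP[x _ ->] //].
exists (map (head 0%N) t); rewrite /singletons -map_comp -[X in X = _]map_id.
by apply/eq_in_map => s /allS; case: s => [|x []].
Qed.

Lemma cols_from_with_tail Ss q v : cols_from (with_tail Ss q v) q (size v) = singletons v.
Proof.
apply: (@eq_from_nth _ [::]) => [|i]; first by rewrite !size_map size_iota.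
rewrite size_map size_iota => lt_iv.
rewrite (nth_map 0%N) ?size_iota // nth_iota // nth_cat size_mkseq.
by rewrite ltnNge leq_addr addKn.
Qed.

Lemma nth_with_tail Ss q v j : (j < q)%N -> nth [::] (with_tail Ss q v) j = nth [::] Ss j.
Proof. by move=> lt_jq; rewrite nth_cat size_mkseq lt_jq nth_mkseq. Qed.

Lemma size_cols_from Ss q len : size (cols_from Ss q len) = len.
Proof. by rewrite size_map size_iota. Qed.

Lemma perm_nseq_count (T : eqType) (x : T) m (s : seq T) :
  (m <= count_mem x s)%N -> exists v, perm_eq s (nseq m x ++ v).
Proof.
move=> le_m; exists ([seq y <- s | y != x] ++ nseq (count_mem x s - m) x).
rewrite perm_sym perm_catCA -nseqD subnKC // perm_catC.
have -> : nseq (count_mem x s) x = [seq y <- s | y == x].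
  by rewrite -size_filter; apply/esym/all_pred1P/filter_all.
by apply/permPl; exact: (perm_filterC (pred1 x) s).
Qed.

Section PermutationSums.

Variables (V : nmodType) (F : seq nat -> V) (q : nat).

Lemma big_perm_drop row r' v :
  perm_eq row (r' ++ v) -> size r' = q ->
  \sum_(w <- permutations row | drop q w == v) F (take q w) =
  \sum_(h <- permutations r') F h.
Proof.
move=> row_r'v size_r'; rewrite -big_filter.
rewrite (@perm_big _ _ _ _ _ [seq h ++ v | h <- permutations r']); last first.
  apply: uniq_perm; first by rewrite filter_uniq ?permutations_uniq.
    rewrite map_inj_uniq ?permutations_uniq // => h1 h2 e.
    have /eqP := e; rewrite eqseq_cat; first by case/andP=> /eqP.
    by apply: (@addIn (size v)); rewrite -!size_cat e.
  move=> w; rewrite mem_filter mem_permutations; apply/andP/mapP.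
    case=> /eqP drop_w w_row; exists (take q w); last by rewrite -drop_w cat_take_drop.
    rewrite mem_permutations -(perm_cat2r v) -{1}drop_w cat_take_drop.
    exact: perm_trans w_row row_r'v.
  case=> h; rewrite mem_permutations => h_r' ->.
  rewrite -size_r' -(perm_size h_r') drop_size_cat //; split=> //.
  by rewrite perm_sym (permPl row_r'v) perm_cat2r perm_sym.
rewrite big_map; apply: eq_big_seq => h; rewrite mem_permutations => /perm_size h_r'.
by rewrite take_size_cat // h_r'.
Qed.

Lemma big_perm_drop_exchange row row' v v' :
  (q <= size row)%N -> (q <= size row')%N -> perm_eq (row ++ v') (row' ++ v) ->
  \sum_(w <- permutations row | drop q w == v) F (take q w) =
  \sum_(w <- permutations row' | drop q w == v') F (take q w).
Proof.
wlog /hasP[w w_row /eqP drop_w] : row row' v v' /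
    has (fun w => drop q w == v) (permutations row).
  move=> main le_q le_q' perm_rv.
  have [has_w|/hasPn no_w] := boolP (has (fun w => drop q w == v) (permutations row)).
    exact: main.
  have [has_w'|/hasPn no_w'] := boolP (has (fun w => drop q w == v') (permutations row')).
    by symmetry; apply: main; rewrite // perm_sym.
  rewrite !big1_seq // => w /andP[drop_w w_perm].
    by move: (no_w' w w_perm); rewrite drop_w.
  by move: (no_w w w_perm); rewrite drop_w.
move=> le_q _ perm_rv; move: (w_row); rewrite mem_permutations => w_perm.
have size_top : size (take q w) = q by rewrite size_takel // (perm_size w_perm).
have row_split : perm_eq row (take q w ++ v) by rewrite -drop_w cat_take_drop perm_sym.
have row'_split : perm_eq row' (take q w ++ v').
  rewrite -(perm_cat2r v) -(permPl perm_rv).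
  apply: perm_trans (_ : perm_eq _ ((take q w ++ v) ++ v')) _; first by rewrite perm_cat2r.
  by rewrite -!catA perm_cat2l perm_catC.
by rewrite (big_perm_drop row_split size_top) (big_perm_drop row'_split size_top).
Qed.

Lemma big_perm_drop_count_eq0 (x : nat) row v :
  (count_mem x v + q < count_mem x row)%N ->
  \sum_(w <- permutations row | drop q w == v) F (take q w) = 0.
Proof.
move=> lt_count; apply: big1_seq => w /andP[/eqP drop_w].
rewrite mem_permutations => /permP/(_ (pred1 x)) count_w.
move: lt_count; rewrite -count_w -(cat_take_drop q w) count_cat drop_w.
by have := count_size (pred1 x) (take q w); rewrite size_take_min; lia.
Qed.

End PermutationSums.

Lemma prod_natr_eq (R : pzSemiRingType) (I : Type) (T : eqType) (s : seq I) (f g : I -> T) :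
  \prod_(i <- s) ((f i == g i)%:R : R) = (map f s == map g s)%:R.
Proof.
elim: s => [|i s IHs]; first by rewrite big_nil.
by rewrite big_cons IHs eqseq_cons; case: (f i == g i); rewrite ?mul1r ?mul0r.
Qed.

Lemma shape_rowarr R T : T \in rowarr R -> shape T = shape R.
Proof.
elim: R T => [|row R IHR] T /=; first by rewrite inE => /eqP ->.
case/allpairsPdep => w [T' [w_row T'_R ->]] /=.
move: w_row; rewrite mem_permutations => /perm_size size_w.
by rewrite /shape /= -/(shape T') (IHR _ T'_R) size_w.
Qed.

Section Coordinates.

Variable K : fieldType.

Lemma wedge_coord1 x S : wedge_coord K [:: x] S = (S == [:: x])%:R.
Proof.
have inversions1 : inversions [:: x] = 0%N.
  by apply: big1 => i _; apply: big1 => j; rewrite (ord1 i) (ord1 j).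
rewrite /wedge_coord; have [->|neq_S] := eqVneq S [:: x].
  by rewrite perm_refl inversions1 expr0.
case: ifP => // /andP[_ x_S]; case/negP: neq_S; apply/eqP.
by apply: perm_small_eq => //; rewrite perm_sym.
Qed.

(* The contribution of the first q columns to [bracket_coord K (h :: R) Ss],
   the top row being frozen to h. *)
Definition top_fixed_coord (R : tableau) (Ss : seq (seq nat)) (q : nat) (h : seq nat) : K :=
  \sum_(T' <- rowarr R)
     \prod_(0 <= j < q) wedge_coord K (nth 0%N h j :: column T' j) (nth [::] Ss j).

Lemma top_fixed_coord_eq R Ss Ss' q h :
  (forall j, (j < q)%N -> nth [::] Ss j = nth [::] Ss' j) ->
  top_fixed_coord R Ss q h = top_fixed_coord R Ss' q h.
Proof.
move=> eq_Ss; apply: eq_bigr => T' _; apply: eq_big_nat => j /andP[_ lt_jq].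
by rewrite eq_Ss.
Qed.

Lemma bracket_coord_long_row row R Ss q :
  (q <= size row)%N -> all (fun r => size r <= q)%N R ->
  bracket_coord K (row :: R) Ss =
  \sum_(w <- permutations row | singletons (drop q w) == cols_from Ss q (size row - q))
     top_fixed_coord R Ss q (take q w).
Proof.
move=> le_q short_R; rewrite /bracket_coord /= big_allpairs_dep [RHS]big_mkcond /=.
apply: eq_big_seq => w; rewrite mem_permutations => /perm_size size_w.
set tail_ok := (_ == _).
rewrite (_ : (if tail_ok then _ else _) = tail_ok%:R * top_fixed_coord R Ss q (take q w));
  last by case: tail_ok; rewrite ?mul1r ?mul0r.
rewrite /top_fixed_coord mulr_sumr; apply: eq_big_seq => T' T'_R.
have short_T' : all (fun r => size r <= q)%N T'.
  move: short_R; rewrite -!(all_map size (fun s => s <= q)%N).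
  by have := shape_rowarr T'_R; rewrite /shape => ->.
rewrite -(big_mkord xpredT (fun j => wedge_coord K (column (w :: T') j) (nth [::] Ss j))).
rewrite (big_cat_nat (n := q)) // mulrC; congr (_ * _).
  apply: eq_big_nat => j /andP[_ lt_jq].
  by rewrite /column /= size_w (leq_trans lt_jq le_q) nth_take.
have column_tail j : (q <= j < size row)%N -> column (w :: T') j = [:: nth 0%N w j].
  case/andP=> le_qj lt_j.
  have no_lower : [seq r <- T' | (j < size r)%N] = [::].
    apply/eqP; rewrite -[_ == _]negbK -has_filter; apply/hasPn => r /(allP short_T') le_r.
    by rewrite -leqNgt (leq_trans le_r).
  by rewrite /column /= size_w lt_j no_lower.
under eq_big_nat => j lt_j do rewrite column_tail // wedge_coord1.
have drop_w : drop q w = [seq nth 0%N w j | j <- iota q (size row - q)].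
  by rewrite map_nth_iota ?size_w // take_oversize // size_drop size_w.
by rewrite prod_natr_eq eq_sym /tail_ok /index_iota /singletons drop_w -map_comp.
Qed.

Lemma bracket_coord_long_row_singletons row R Ss q v :
  (q <= size row)%N -> all (fun r => size r <= q)%N R ->
  cols_from Ss q (size row - q) = singletons v ->
  bracket_coord K (row :: R) Ss =
  \sum_(w <- permutations row | drop q w == v) top_fixed_coord R Ss q (take q w).
Proof.
move=> le_q short_R cols_v; rewrite (bracket_coord_long_row _ le_q short_R) cols_v.
by apply: eq_bigl => w; rewrite (inj_eq singletons_inj).
Qed.

Lemma bracket_coord_long_row_eq0 row R Ss q :
  (q <= size row)%N -> all (fun r => size r <= q)%N R ->
  ~~ all (fun s => size s == 1%N) (cols_from Ss q (size row - q)) ->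
  bracket_coord K (row :: R) Ss = 0.
Proof.
move=> le_q short_R /singletonsP not_singletons.
rewrite (bracket_coord_long_row _ le_q short_R).
by apply: big1 => w /eqP cols_w; case: not_singletons; exists (drop q w).
Qed.

Lemma bracket_coord_tab_plus row R Ss Ss' q m v v' :
  (q <= size row)%N -> all (fun r => size r <= q)%N R ->
  (forall j, (j < q)%N -> nth [::] Ss j = nth [::] Ss' j) ->
  cols_from Ss q (size row - q) = singletons v ->
  cols_from Ss' q (m + size row - q) = singletons v' ->
  perm_eq v' (nseq m 1%N ++ v) ->
  bracket_coord K (row :: R) Ss = bracket_coord K (tab_plus m (row :: R)) Ss'.
Proof.
move=> le_q short_R eq_Ss cols_v cols_v' v'_v.
have le_q' : (q <= size (nseq m 1%N ++ row))%N.
  by rewrite size_cat size_nseq (leq_trans le_q) ?leq_addl.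
rewrite /= (bracket_coord_long_row_singletons le_q short_R cols_v).
rewrite (bracket_coord_long_row_singletons (v := v') le_q' short_R);
  last by rewrite size_cat size_nseq.
under eq_bigr => w _ do rewrite (top_fixed_coord_eq _ _ eq_Ss).
apply: big_perm_drop_exchange => //.
by rewrite -catA perm_sym perm_catCA perm_cat2l perm_sym.
Qed.

Lemma bracket_coord_lift_tab_plus q L m Ss :
  (forall T, long_top_row q L T -> bracket_coord K T Ss = 0) \/
  exists Ss', forall T, long_top_row q L T ->
    bracket_coord K T Ss = bracket_coord K (tab_plus m T) Ss'.
Proof.
have [/singletonsP[v cols_v] | not_singletons] :=
  boolP (all (fun s => size s == 1%N) (cols_from Ss q (L - q))); [right | left].
  exists (with_tail Ss q (nseq m 1%N ++ v)).
  move=> -[|row R] //= /and3P[/eqP size_row short_R le_q1]; subst L.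
  have le_q := leq_trans le_q1 (count_size _ row).
  have size_v : size v = (size row - q)%N.
    by have := congr1 size cols_v; rewrite size_cols_from size_map.
  apply: (bracket_coord_tab_plus (q := q) (v := v)) => //.
  - by move=> j lt_jq; rewrite nth_with_tail.
  - rewrite (_ : m + size row - q = size (nseq m 1%N ++ v))%N ?cols_from_with_tail //.
    by rewrite size_cat size_nseq size_v addnBA.
move=> -[|row R] //= /and3P[/eqP size_row short_R le_q1]; subst L.
exact: bracket_coord_long_row_eq0 (leq_trans le_q1 (count_size _ row)) short_R not_singletons.
Qed.

Lemma bracket_coord_reduce_tab_plus q L m Ss' :
  (forall T, long_top_row q L T -> bracket_coord K (tab_plus m T) Ss' = 0) \/
  exists Ss, forall T, long_top_row q L T ->
    bracket_coord K (tab_plus m T) Ss' = bracket_coord K T Ss.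
Proof.
have [/singletonsP[v' cols_v'] | not_singletons] :=
  boolP (all (fun s => size s == 1%N) (cols_from Ss' q (m + L - q))); last first.
  left=> -[|row R] //= /and3P[/eqP size_row short_R le_q1]; subst L.
  apply: (bracket_coord_long_row_eq0 (q := q)); rewrite ?size_cat ?size_nseq //.
  by rewrite (leq_trans le_q1) ?(leq_trans (count_size _ _)) ?leq_addl.
have [few_ones | /perm_nseq_count[v v'_v]] := ltnP (count_mem 1%N v') m; [left | right].
  move=> -[|row R] //= /and3P[/eqP size_row short_R le_q1]; subst L.
  rewrite (bracket_coord_long_row_singletons (q := q) (v := v')) ?size_cat ?size_nseq //.
    apply: (big_perm_drop_count_eq0 _ (x := 1%N)).
    by rewrite count_cat count_nseq mul1n -addSn leq_add.
  by rewrite (leq_trans le_q1) ?(leq_trans (count_size _ _)) ?leq_addl.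
exists (with_tail Ss' q v).
move=> -[|row R] //= /and3P[/eqP size_row short_R le_q1]; subst L.
have le_q := leq_trans le_q1 (count_size _ row).
have size_v : size v = (size row - q)%N.
  have := congr1 size cols_v'; rewrite size_cols_from size_map (perm_size v'_v).
  by rewrite size_cat size_nseq; lia.
symmetry; apply: (bracket_coord_tab_plus (q := q) (v := v) (v' := v')) => //.
- by move=> j lt_jq; rewrite nth_with_tail.
- by rewrite -size_v cols_from_with_tail.
Qed.

End Coordinates.

Lemma size_words n m w : w \in words n m -> size w = m.
Proof.
elim: m w => [|m IHm] w /=; first by rewrite inE => /eqP ->.
by case/allpairsPdep => a [w' [_ w'_words ->]] /=; rewrite (IHm _ w'_words).
Qed.

Lemma shape_tabs n nu T : T \in tabs n nu -> shape T = nu.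
Proof.
elim: nu T => [|m nu IHnu] T /=; first by rewrite inE => /eqP ->.
case/allpairsPdep => w [T' [w_words T'_tabs ->]] /=.
by rewrite /shape /= -/(shape T') (IHnu _ T'_tabs) (size_words w_words).
Qed.

Lemma setA_long_top_row n r la mu U :
  (0 < n)%N -> is_partition n r mu -> (nth 0 mu 1 <= nth 0 la 0)%N ->
  U \in setA n la mu -> long_top_row (nth 0 mu 1) (nth 0 mu 0) U.
Proof.
move=> n_gt0 /and3P[/eqP size_mu sorted_mu _] le_mu2_la1.
rewrite mem_filter => /andP[/andP[_ /andP[ones _]] /shape_tabs shape_U].
case: U shape_U ones => [|row R] shape_U ones; first by move: n_gt0; rewrite -size_mu -shape_U.
rewrite -shape_U /= in sorted_mu le_mu2_la1 ones *.
rewrite eqxx (leq_trans le_mu2_la1 ones) andbT /=; clear -sorted_mu.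
case: R sorted_mu => [|b R] //= /andP[_ path_R]; rewrite leqnn /=.
by have := order_path_min (rev_trans leq_trans) path_R; rewrite all_map.
Qed.

Theorem corollary4p5 (K : fieldType) (p n r : nat) (la mu : seq nat) (k d : nat)
    (c : tableau -> K) :
  p \in [pchar K] ->
  (forall s : seq K, exists x : K, x \notin s) ->
  (0 < n)%N ->
  is_partition n r la -> is_partition n r mu ->
  (nth 0 mu 1 <= nth 0 la 0)%N ->
  (0 < k)%N -> (0 < d)%N ->
  (weyl_comb_eq0 [seq (c U, U) | U <- setA n la mu]
   <-> weyl_comb_eq0 [seq (c U, tab_plus (k * p ^ d) U) | U <- setA n la mu]).
Proof.
move=> _ _ n_gt0 _ mu_part le_mu2_la1 _ _.
set m := (k * p ^ d)%N; set q := nth 0 mu 1; set L := nth 0 mu 0.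
have A_long U : U \in setA n la mu -> long_top_row q L U.
  exact: setA_long_top_row n_gt0 mu_part le_mu2_la1.
split=> eq0 Ss; rewrite big_map /=.
- have [vanish | [Ss0 coord_eq]] := bracket_coord_reduce_tab_plus K q L m Ss.
    by rewrite big1_seq // => U /andP[_ /A_long/vanish ->]; rewrite mulr0.
  by rewrite -[RHS](eq0 Ss0) big_map; apply: eq_big_seq => U /A_long/coord_eq ->.
- have [vanish | [Ss' coord_eq]] := bracket_coord_lift_tab_plus K q L m Ss.
    by rewrite big1_seq // => U /andP[_ /A_long/vanish ->]; rewrite mulr0.
  by rewrite -[RHS](eq0 Ss') big_map; apply: eq_big_seq => U /A_long/coord_eq ->.
Qed.
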